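(* There is an absolute constant $C>0$ such that for every integer $k\ge 2$, all real $x \ge 1$ and all real $y$ with $1 \le y \le x$, \[ \#\{\, n \text{ $k$-full} : x < n \le x+y,\ p^+(n) \le y^{1/2}\,\} \le \#\{\, n \text{ squarefull} : x < n \le x+y,\ p^+(n) \le y^{1/2}\,\} \le C\, y^{11/12}. \]
   Context: A positive integer $n$ is $k$-full if every prime $p$ dividing $n$ satisfies $p^k \mid n$; squarefull means $2$-full. For an integer $n \ge 2$, $p^+(n)$ denotes the largest prime factor of $n$, with the convention $p^+(1)=1$. *)

From mathcomp Require Import all_boot.
From Stdlib Require Import Reals.

Definition kfull (k n : nat) : bool :=
  (0 < n) && all (fun p => p ^ k %| n) (primes n).

Definition squarefull (n : nat) : bool := kfull 2 n.

(* largest prime factor, with p^+(1) = 1 : max_pdiv 1 = 1 in mathcomp *)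
Definition pplus (n : nat) : nat := max_pdiv n.

(* #{ n : nat | P n and x < n <= x + y } ; N bounds the range, chosen as
   Z.to_nat (up (x+y)) which exceeds x + y. *)
Definition count_in (P : nat -> bool) (x y : R) : nat :=
  count (fun n => P n && Rlt_dec x (INR n) && Rle_dec (INR n) (x + y))
        (iota 0 (Z.to_nat (up (x + y)) + 1)).

(* A squarefull n satisfies a^2 | n | a^3 for some a, so a >= n^(1/3).  If moreover
   p^+(n) <= Q, stripping prime factors off a one at a time yields a divisor d of a with
   L <= d <= L Q, whence d^2 | n.  Taking L ~ y^(1/12) and Q ~ y^(1/2), the squarefull
   smooth n in (x, x + y] are covered by the multiples of d^2 for L <= d <= L Q, of which
   there are at most sum_d (y / d^2 + 2) <= 2 y / L + 2 L Q = O(y^(11/12)). *)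

From Pilot Require Import Defs.
From mathcomp Require Import all_boot.
From Stdlib Require Import Reals Lra Psatz.
(* Reals shadows [expn] by [Nat.pow] in the notation [_ ^ _]; [kfull] in Defs uses the
   latter, and re-importing [ssrnat] restores the former here. *)
From mathcomp Require Import ssrnat zify.

Set Implicit Arguments.
Unset Strict Implicit.

Lemma Nat_pow_expn m e : Nat.pow m e = m ^ e.
Proof. by elim: e => //= e ->; rewrite expnS. Qed.

Lemma squarefullP n :
  reflect (0 < n /\ forall p, prime p -> p %| n -> p ^ 2 %| n) (squarefull n).
Proof.
apply: (iffP andP) => [[n_gt0 /allP sqr_dvd] | [n_gt0 sqr_dvd]]; split=> //.
  by move=> p p_pr p_dvd; rewrite -Nat_pow_expn sqr_dvd // mem_primes p_pr n_gt0.
apply/allP=> p; rewrite mem_primes Nat_pow_expn => /and3P[p_pr _].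
exact: sqr_dvd.
Qed.

Lemma kfull_squarefull k n : 2 <= k -> kfull k n -> squarefull n.
Proof.
move=> k_ge2 /andP[n_gt0 /allP kfull_n]; rewrite /squarefull /kfull n_gt0.
apply/allP=> p /kfull_n; rewrite !Nat_pow_expn; apply: dvdn_trans.
exact: dvdn_exp2l.
Qed.

Lemma squarefull_dvd_cube n :
  0 < n -> (forall p, prime p -> p %| n -> p ^ 2 %| n) ->
  exists2 a, a ^ 2 %| n & n %| a ^ 3.
Proof.
elim/ltn_ind: n => n IH n_gt0 sqr_dvd.
have [n_le1 | n_gt1] := leqP n 1.
  by exists 1; have -> : n = 1 by lia.
have p_pr := pdiv_prime n_gt1; set p := pdiv n in p_pr.
have [m p_m n_eq] := pfactor_coprime p_pr n_gt0; set e := logn p n in n_eq.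
have e_ge2 : 2 <= e by rewrite -pfactor_dvdn // sqr_dvd // pdiv_dvd.
have m_gt0 : 0 < m by move: n_gt0; rewrite n_eq muln_gt0 => /andP[].
have m_lt_n : m < n.
  rewrite n_eq -[X in X < _]muln1 ltn_pmul2l // -(expn0 p) ltn_exp2l ?prime_gt1 //.
  lia.
have coprime_m q : prime q -> q %| m -> coprime (q ^ 2) (p ^ e).
  move=> q_pr q_m; apply/coprimeXl/coprimeXr; rewrite prime_coprime //.
  rewrite dvdn_prime2 //; apply: contraTneq q_m => ->.
  by rewrite -prime_coprime.
have [a a_m m_a] : exists2 a, a ^ 2 %| m & m %| a ^ 3.
  apply: IH => // q q_pr q_m.
  rewrite -(Gauss_dvdl _ (coprime_m q q_pr q_m)) -n_eq sqr_dvd //.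
  by rewrite n_eq dvdn_mulr.
(* [2 * e./2 <= e <= 3 * e./2] as [e >= 2]. *)
exists (a * p ^ e./2); rewrite n_eq !expnMn -!expnM.
  by rewrite dvdn_mul // dvdn_exp2l //; lia.
by rewrite dvdn_mul // dvdn_exp2l //; lia.
Qed.

Lemma smooth_divisor_between T Q a :
  0 < T -> 0 < Q -> (forall p, prime p -> p %| a -> p <= Q) -> T <= a ->
  exists2 d, d %| a & T <= d <= T * Q.
Proof.
move=> T_gt0 Q_gt0; elim/ltn_ind: a => a IH smooth_a T_le_a.
have [a_le_TQ | TQ_lt_a] := leqP a (T * Q); first by exists a; rewrite ?T_le_a.
have a_gt1 : 1 < a by rewrite (leq_ltn_trans _ TQ_lt_a) // -(muln1 1) leq_mul.
have p_pr := pdiv_prime a_gt1; have p_a := pdiv_dvd a; set p := pdiv a in p_pr p_a.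
have p_le_Q := smooth_a p p_pr p_a.
have a_eq : a = a %/ p * p by rewrite divnK.
have T_lt_ap : T < a %/ p.
  rewrite -(ltn_pmul2r (prime_gt0 p_pr)) -a_eq.
  by apply: leq_ltn_trans TQ_lt_a; rewrite leq_mul2l p_le_Q orbT.
have ap_lt_a : a %/ p < a by rewrite ltn_Pdiv ?prime_gt1 // (leq_trans T_gt0).
have smooth_ap q : prime q -> q %| a %/ p -> q <= Q.
  by move=> q_pr /dvdn_trans/(_ (dvdn_div p_a)); apply: smooth_a.
have [d d_ap T_d] := IH (a %/ p) ap_lt_a smooth_ap (ltnW T_lt_ap).
by exists d => //; apply: dvdn_trans d_ap (dvdn_div p_a).
Qed.

Lemma count_le_sum_count (I T : eqType) (P : pred T) (R : I -> pred T) r s :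
  uniq r -> (forall n, n \in s -> P n -> exists2 i, i \in r & R i n) ->
  count P s <= \sum_(i <- r) count (R i) s.
Proof.
move=> r_uniq; elim: s => [|n s IH] cover /=; first by rewrite big1.
rewrite big_split /= leq_add ?IH //; last first.
  by move=> m m_s; apply: cover; rewrite inE m_s orbT.
case P_n: (P n) => //; have [i i_r R_i_n] := cover n (mem_head n s) P_n.
by rewrite (bigD1_seq i) //= R_i_n.
Qed.

Lemma count_dvdn_iota m u N :
  0 < m -> count (dvdn m) (iota u N) <= N %/ m + 2.
Proof.
move=> m_gt0; rewrite -size_filter.
rewrite -(size_iota (u %/ m) (N %/ m + 2)) -(size_map (muln^~ m) (iota (u %/ m) _)).
apply: uniq_leq_size; first by rewrite filter_uniq ?iota_uniq.
move=> n; rewrite mem_filter mem_iota => /and3P[m_n u_n n_lt].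
rewrite -(divnK m_n); apply: map_f; rewrite mem_iota leq_div2r //=.
have := leq_divDl m u N; have : n %/ m <= (u + N) %/ m by apply: leq_div2r; lia.
lia.
Qed.

Lemma squarefull_sqr_divisor_between T Q n :
  0 < T -> 0 < Q -> squarefull n -> (forall p, prime p -> p %| n -> p <= Q) ->
  T ^ 3 <= n -> exists2 d, T <= d <= T * Q & d ^ 2 %| n.
Proof.
move=> T_gt0 Q_gt0 /squarefullP[n_gt0 sqr_dvd] smooth_n T3_le_n.
have [a a2_n n_a3] := squarefull_dvd_cube n_gt0 sqr_dvd.
have a_gt0 : 0 < a.
  by rewrite lt0n; apply: contraTneq a2_n => ->; rewrite exp0n // dvd0n -lt0n.
have n_le_a3 : n <= a ^ 3 by rewrite dvdn_leq ?expn_gt0 ?a_gt0.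
have T_le_a : T <= a by rewrite -(leq_exp2r T a (_ : 0 < 3)) // (leq_trans T3_le_n).
have smooth_a p : prime p -> p %| a -> p <= Q.
  move=> p_pr p_a; apply: smooth_n => //; apply: dvdn_trans a2_n.
  by apply: dvdn_trans p_a _; rewrite dvdn_exp.
have [d d_a T_d] := smooth_divisor_between T_gt0 Q_gt0 smooth_a T_le_a.
by exists d => //; apply: dvdn_trans (dvdn_exp2r 2 d_a) a2_n.
Qed.

Lemma count_smooth_squarefull_iota L Q u M :
  0 < L -> 0 < Q -> L ^ 3 <= u ->
  count (fun n => squarefull n && (pplus n <= Q)) (iota u M)
    <= \sum_(L <= d < (L * Q).+1) (M %/ d ^ 2 + 2).
Proof.
move=> L_gt0 Q_gt0 L3_le_u.
apply: (@leq_trans (\sum_(L <= d < (L * Q).+1) count (dvdn (d ^ 2)) (iota u M))).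
  apply: count_le_sum_count; first exact: iota_uniq.
  move=> n; rewrite mem_iota => /andP[u_le_n _] /andP[sf_n pplus_n].
  have n_gt0 : 0 < n by case/andP: sf_n.
  have smooth_n p : prime p -> p %| n -> p <= Q.
    by move=> p_pr p_n; rewrite (leq_trans _ pplus_n) // max_pdiv_max // mem_primes p_pr n_gt0.
  have [d L_d d2_n] := squarefull_sqr_divisor_between L_gt0 Q_gt0 sf_n smooth_n (leq_trans L3_le_u u_le_n).
  by exists d; rewrite // mem_index_iota ltnS.
rewrite big_nat_cond [X in _ <= X]big_nat_cond; apply: leq_sum => d /andP[/andP[L_d _] _].
by apply: count_dvdn_iota; rewrite expn_gt0 (leq_trans L_gt0).
Qed.

Section RealBounds.
Local Open Scope R_scope.

Lemma INR_divn_le N m : (0 < m)%N -> INR (N %/ m) <= INR N / INR m.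
Proof.
move=> m_gt0; have m_pos : 0 < INR m by apply: lt_0_INR; apply/ltP.
apply: (Rmult_le_reg_r (INR m)) => //; rewrite /Rdiv Rmult_assoc Rinv_l ?Rmult_1_r; last lra.
rewrite {2}(divn_eq N m) plus_INR mult_INR; have := pos_INR (N %% m); lra.
Qed.

(* Telescoping: [1/d^2 <= 2/d - 2/(d+1)]. *)
Lemma sum_divn_sqr_le N T k : (0 < T)%N ->
  INR (\sum_(T <= d < T + k) N %/ d ^ 2) + 2 * INR N / INR (T + k)
    <= 2 * INR N / INR T.
Proof.
move=> T_gt0; elim: k => [|k IH]; first by rewrite addn0 big_geq //=; lra.
rewrite addnS big_nat_recr ?leq_addr // plus_INR S_INR.
rewrite -[X in INR X + _ + _ <= _]/(\sum_(T <= d < T + k) N %/ d ^ 2).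
set a := INR (T + k) in IH *.
have a_ge1 : 1 <= a by rewrite /a -/(INR 1); apply: le_INR; apply/leP; rewrite addn_gt0 T_gt0.
have N_ge0 := pos_INR N.
have term_le : INR (N %/ (T + k) ^ 2) <= INR N / (a * a).
  rewrite /a -mult_INR -mulnn; apply: INR_divn_le.
  by rewrite muln_gt0 addn_gt0 T_gt0.
suff : INR N / (a * a) + 2 * INR N / (a + 1) <= 2 * INR N / a by lra.
apply: (Rmult_le_reg_r (a * a * (a + 1))); first nra.
field_simplify; [nra | lra | lra].
Qed.

Lemma count_smooth_squarefull_le L Q u M :
  (0 < L)%N -> (0 < Q)%N -> (L ^ 3 <= u)%N ->
  INR (count (fun n => squarefull n && (pplus n <= Q)%N) (iota u M))
    <= 2 * INR M / INR L + 2 * INR (L * Q).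
Proof.
move=> L_gt0 Q_gt0 L3_le_u.
have count_le := count_smooth_squarefull_iota M L_gt0 Q_gt0 L3_le_u.
apply: Rle_trans (le_INR _ _ (leP count_le)) _.
set k := ((L * Q).+1 - L)%N.
have LQ_split : (L * Q).+1 = (L + k)%N by rewrite subnKC // leqW // leq_pmulr.
have k_le_LQ : (k <= L * Q)%N by rewrite leq_subLR -add1n leq_add2r.
rewrite LQ_split big_split sum_nat_const_nat addKn plus_INR mult_INR.
rewrite -[X in INR X + _ <= _]/(\sum_(L <= d < L + k) M %/ d ^ 2).
have sum_le := sum_divn_sqr_le M k L_gt0.
have tail_ge0 : 0 <= 2 * INR M / INR (L + k).
  apply: Rmult_le_pos; first by apply: Rmult_le_pos; [lra | apply: pos_INR].
  by apply/Rlt_le/Rinv_0_lt_compat/lt_0_INR/ltP; rewrite addn_gt0 L_gt0.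
have := le_INR _ _ (leP k_le_LQ); simpl (INR 2); lra.
Qed.

Lemma nat_floor r : 0 <= r -> exists N : nat, INR N <= r < INR N + 1.
Proof.
move=> r_ge0; have [up_gt up_le] := archimed r.
have up_pos : (0 < up r)%Z by apply: lt_IZR; lra.
exists (Z.to_nat (up r - 1)).
rewrite INR_IZR_INZ Znat.Z2Nat.id ?minus_IZR; [lra | lia].
Qed.

Lemma count_in_le_count_iota (P P' : pred nat) x y u M :
  (forall n, P n -> x < INR n -> INR n <= x + y -> P' n /\ (u <= n < u + M)%N) ->
  (count_in P x y <= count P' (iota u M))%N.
Proof.
move=> P_sub; rewrite /count_in -!size_filter.
apply: uniq_leq_size; first by rewrite filter_uniq ?iota_uniq.
move=> n; rewrite !mem_filter.
case P_n: (P n); case: Rlt_dec => //= x_lt; case: Rle_dec => //= le_xy _.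
by have [-> range_n] := P_sub n P_n x_lt le_xy; rewrite mem_iota.
Qed.

Lemma Rpower_twelfth y : 1 <= y ->
  exists2 z, 1 <= z & y = z ^ 12 /\ Rpower y (11 / 12) = z ^ 11.
Proof.
move=> y_ge1; set z := Rpower y (1 / 12).
have z_pos : 0 < z by apply: exp_pos.
have z_pow n : z ^ n = Rpower y (INR n / 12).
  by rewrite -Rpower_pow // Rpower_mult; congr Rpower; lra.
exists z; last split.
- have one_le := Rle_Rpower y 0 (1 / 12) y_ge1 ltac:(lra).
  by rewrite Rpower_O -/z in one_le; lra.
- rewrite z_pow (_ : INR 12 / 12 = 1); last by simpl; field.
  by rewrite Rpower_1 //; lra.
- by rewrite z_pow; congr Rpower; simpl; field.
Qed.

Lemma floor_twelfth_bound z L Q M :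
  1 <= z -> (0 < L)%N -> INR L <= z < INR L + 1 -> INR Q <= z ^ 6 -> INR M <= z ^ 12 ->
  2 * INR M.+1 / INR L + 2 * INR (L * Q) <= 10 * z ^ 11.
Proof.
move=> z_ge1 L_gt0 [L_le L_gt] Q_le M_le; have z11_ge1 : 1 <= z ^ 11 by apply: pow_R1_Rle.
rewrite mult_INR S_INR.
have L_ge1 : 1 <= INR L by apply: (le_INR 1); apply/leP.
have L_pos : 0 < INR L by lra.
have LQ_le : INR L * INR Q <= z ^ 11.
  have : z ^ 7 <= z ^ 11 by apply: Rle_pow; [lra | lia].
  have : INR L * INR Q <= z * z ^ 6 by apply: Rmult_le_compat; try apply: pos_INR; lra.
  by rewrite -tech_pow_Rmult; lra.
have z_Linv : z * / INR L <= 2.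
  have : z * / INR L <= (2 * INR L) * / INR L.
    by apply: Rmult_le_compat_r; [exact/Rlt_le/Rinv_0_lt_compat | lra].
  by rewrite Rmult_assoc Rinv_r ?Rmult_1_r; lra.
have M_Linv : (INR M + 1) * / INR L <= 4 * z ^ 11.
  have z12 : z ^ 12 = z ^ 11 * z by rewrite -tech_pow_Rmult Rmult_comm.
  have : 0 < / INR L by apply: Rinv_0_lt_compat.
  nra.
rewrite /Rdiv; lra.
Qed.

Lemma count_in_squarefull_smooth_le x z : 1 <= z -> z ^ 12 <= x ->
  INR (count_in (fun n => squarefull n && Rle_dec (INR (pplus n)) (z ^ 6)) x (z ^ 12))
    <= 10 * z ^ 11.
Proof.
move=> z_ge1 zx; have z6_ge1 : 1 <= z ^ 6 by apply: pow_R1_Rle.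
have z12_ge1 : 1 <= z ^ 12 by apply: pow_R1_Rle.
have [X [X_le_x x_lt_X]] := nat_floor (ltac:(lra) : 0 <= x).
have [M [M_le M_gt]] := nat_floor (ltac:(lra) : 0 <= z ^ 12).
have [Q [Q_le Q_gt]] := nat_floor (ltac:(lra) : 0 <= z ^ 6).
have [L [L_le L_gt]] := nat_floor (ltac:(lra) : 0 <= z).
have L_gt0 : (0 < L)%N by apply/ltP/INR_lt; simpl; lra.
have Q_gt0 : (0 < Q)%N by apply/ltP/INR_lt; simpl; lra.
have L3_le_X : (L ^ 3 <= X.+1)%N.
  apply/leP/INR_le; rewrite -Nat_pow_expn pow_INR S_INR.
  have : INR L ^ 3 <= z ^ 3 by apply: pow_incr; split; [apply: pos_INR | lra].
  have : z ^ 3 <= z ^ 12 by apply: Rle_pow; [lra | lia].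
  lra.
have count_in_le : (count_in (fun n => squarefull n && Rle_dec (INR (pplus n)) (z ^ 6)) x (z ^ 12)
    <= count (fun n => squarefull n && (pplus n <= Q)%N) (iota X.+1 M.+1))%N.
  apply: count_in_le_count_iota => n /andP[sf_n]; case: Rle_dec => // pplus_le _ x_lt n_le.
  rewrite sf_n; split; first by rewrite -ltnS; apply/ltP/INR_lt; rewrite S_INR; lra.
  by apply/andP; split; apply/ltP/INR_lt; rewrite ?plus_INR ?S_INR; lra.
apply: Rle_trans (le_INR _ _ (leP count_in_le)) _.
apply: Rle_trans (count_smooth_squarefull_le M.+1 L_gt0 Q_gt0 L3_le_X) _.
exact: floor_twelfth_bound.
Qed.
End RealBounds.

Theorem theorem3 :
  exists C : R, (0 < C)%R /\
    forall (k : nat) (x y : R), (2 <= k)%N -> (1 <= x)%R -> (1 <= y)%R -> (y <= x)%R ->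
      (INR (count_in (fun n => kfull k n && Rle_dec (INR (pplus n)) (sqrt y)) x y)
         <= INR (count_in (fun n => squarefull n && Rle_dec (INR (pplus n)) (sqrt y)) x y))%R /\
      (INR (count_in (fun n => squarefull n && Rle_dec (INR (pplus n)) (sqrt y)) x y)
         <= C * Rpower y (11/12))%R.
Proof.
exists 10%R; split=> [|k x y k_ge2 _ y_ge1 y_le_x]; first lra.
split.
  apply/le_INR/leP/sub_count => n /= /andP[/andP[/andP[kfull_n ->] ->] ->].
  by rewrite (kfull_squarefull k_ge2 kfull_n).
have [z z_ge1 [y_eq ->]] := Rpower_twelfth y_ge1.
have sqrt_y : sqrt y = (z ^ 6)%R.
  by rewrite y_eq (pow_mult z 6 2) sqrt_pow2 //; apply: pow_le; lra.
rewrite sqrt_y y_eq; apply: count_in_squarefull_smooth_le => //.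
by rewrite -y_eq.
Qed.
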